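(* Let $n=2$, $D_0>0$, $\alpha>\beta>0$, and $\gamma_1,\gamma_2\in(0,1)$. Assume the matrix $H$ with $H_{ii}=\gamma_i$ and $H_{12}=H_{21}=-(\beta/\alpha)(\gamma_1+\gamma_2)/2$ is positive definite. Let $p^a_1\ge p^a_2\ge0$, and put $$D_0'=D_0(\alpha+\beta)/\alpha,\qquad \alpha'=(\alpha^2-\beta^2)/\alpha.$$ In the two-CP ex post regulation game described below: - If $$p^a_1\ \ge\ \frac{2\alpha}{\beta}\,p^a_2+\frac{(2\alpha-\beta)D_0}{\beta(\alpha-\beta)},$$ then there exists a pure-strategy Nash equilibrium with $d_1>0$ and $d_2=0$, and every pure-strategy Nash equilibrium is of this kind. Every such equilibrium satisfies: - $p^s_1+p^c_1=\frac{D_0'-\alpha'p^a_1}{2\alpha'}$, with $p^s_1$ (or $p^c_1$) otherwise free; - $d_1=\frac{D_0'+\alpha'p^a_1}{2}$; - the net revenue per unit demand $p^s_1+p^c_1+p^a_1=\frac{D_0'+\alpha'p^a_1}{2\alpha'}$ is shared in proportions $\gamma_1$ and $1-\gamma_1$ by the ISP and CP 1. - If this inequality does not hold, there is no pure-strategy Nash equilibrium.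
   Context: Two-CP model with one ISP. Prices $p^s_1,p^s_2$ are chosen by the ISP, and $p^c_i$ by CP $i$; write $p_i=p^s_i+p^c_i$. Demands $d_i(p_1,p_2)$ are defined piecewise: 1. If $p_1<(D_0+\beta p_2)/\alpha$ and $p_2<(D_0+\beta p_1)/\alpha$: $d_1=D_0-\alpha p_1+\beta p_2$ and $d_2=D_0-\alpha p_2+\beta p_1$. 2. If $p_1<D_0/(\alpha-\beta)$ and $p_2\ge(D_0+\beta p_1)/\alpha$: $d_1=D_0-\alpha p_1+\beta(D_0+\beta p_1)/\alpha$ and $d_2=0$. 3. The case symmetric to case 2, with indices $1,2$ swapped. 4. If $p_1\ge D_0/(\alpha-\beta)$ and $p_2\ge D_0/(\alpha-\beta)$: $d_1=d_2=0$. $p^a_i\ge0$ is CP $i$'s advertising revenue per unit demand. Ex post regulation: after prices are set, a regulator sets the payment $p^d_i$ from CP $i$ to the ISP so that the revenue per unit demand $p_i+p^a_i$ from CP $i$'s content is split as $\gamma_i(p_i+p^a_i)$ to the ISP and $(1-\gamma_i)(p_i+p^a_i)$ to CP $i$. The resulting payoffs are $$U_{ISP}=\gamma_1d_1(p_1+p^a_1)+\gamma_2d_2(p_2+p^a_2),\qquad U_{CP,i}=(1-\gamma_i)d_i(p_i+p^a_i).$$ The ISP chooses $(p^s_1,p^s_2)\in\mathbb{R}^2$ and each CP $i$ chooses $p^c_i\in\mathbb{R}$, all simultaneously. *)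

From Stdlib Require Import Reals Lra.
Open Scope R_scope.

(* Demand d1(p1,p2) of the two-CP model; cases 3 and 4 give d1 = 0.
   The four cases of the paper partition R^2 when alpha > beta > 0. *)
Definition dem1 (D0 al be p1 p2 : R) : R :=
  if Rlt_dec p1 ((D0 + be * p2) / al) then
    if Rlt_dec p2 ((D0 + be * p1) / al) then D0 - al * p1 + be * p2   (* case 1 *)
    else if Rlt_dec p1 (D0 / (al - be))
         then D0 - al * p1 + be * (D0 + be * p1) / al                  (* case 2 *)
         else 0
  else if Rlt_dec p2 ((D0 + be * p1) / al) then 0                      (* case 3 *)
  else if Rlt_dec p1 (D0 / (al - be))
       then D0 - al * p1 + be * (D0 + be * p1) / al                    (* case 2 *)
       else 0.                                                         (* case 4 *)

Definition dem2 (D0 al be p1 p2 : R) : R := dem1 D0 al be p2 p1.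

Definition U_ISP (D0 al be g1 g2 pa1 pa2 p1 p2 : R) : R :=
  g1 * dem1 D0 al be p1 p2 * (p1 + pa1) + g2 * dem2 D0 al be p1 p2 * (p2 + pa2).
Definition U_CP1 (D0 al be g1 pa1 p1 p2 : R) : R :=
  (1 - g1) * dem1 D0 al be p1 p2 * (p1 + pa1).
Definition U_CP2 (D0 al be g2 pa2 p1 p2 : R) : R :=
  (1 - g2) * dem2 D0 al be p1 p2 * (p2 + pa2).

Definition is_NE (D0 al be g1 g2 pa1 pa2 ps1 ps2 pc1 pc2 : R) : Prop :=
  (forall qs1 qs2 : R,
     U_ISP D0 al be g1 g2 pa1 pa2 (qs1 + pc1) (qs2 + pc2)
       <= U_ISP D0 al be g1 g2 pa1 pa2 (ps1 + pc1) (ps2 + pc2)) /\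
  (forall qc1 : R,
     U_CP1 D0 al be g1 pa1 (ps1 + qc1) (ps2 + pc2)
       <= U_CP1 D0 al be g1 pa1 (ps1 + pc1) (ps2 + pc2)) /\
  (forall qc2 : R,
     U_CP2 D0 al be g2 pa2 (ps1 + pc1) (ps2 + qc2)
       <= U_CP2 D0 al be g2 pa2 (ps1 + pc1) (ps2 + pc2)).

Definition posdef2 (a b c : R) : Prop :=
  forall x1 x2 : R, (x1 <> 0 \/ x2 <> 0) ->
    0 < a * x1 * x1 + 2 * b * x1 * x2 + c * x2 * x2.

(* While both demands are positive they are linear, and there CP 2's first-order condition
   and the ISP's gain from raising p2 are incompatible; the ISP can always secure g1 times
   CP 1's monopoly revenue, so in equilibrium exactly CP 2 is priced out.  CP 1 then faces
   the monopoly demand D0' - al' p1, the ISP's payoff g1 d1 (p1 + pa1) pins p1 at the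
   monopoly price, and CP 2 stays out iff it cannot earn positive revenue against that
   price, which is the threshold on pa1.  Conversely, under the threshold the monopoly
   profile is an equilibrium: CP 1 cannot beat its monopoly revenue, CP 2 earns nothing at
   any price, and positive definiteness of H makes the ISP's shortfall from g1 times the
   monopoly revenue a nonnegative quadratic form. *)

From Stdlib Require Import Reals Lra Psatz.
Open Scope R_scope.

Lemma nonpos_of_first_order a c e :
  0 < e -> (forall h, 0 < h < e -> a * h <= c * (h * h)) -> a <= 0.
Proof.
  intros He H. destruct (Rle_lt_dec a 0) as [|Ha]; [assumption|]. exfalso.
  set (m := a / (2 * (Rabs c + 1))).
  pose proof (Rabs_pos c). pose proof (Rle_abs c).
  assert (Hm : m * (2 * (Rabs c + 1)) = a) by (unfold m; field; lra).
  assert (Hm0 : 0 < m) by (unfold m; apply Rdiv_lt_0_compat; lra).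
  pose proof (Rmin_l (e / 2) m). pose proof (Rmin_r (e / 2) m).
  assert (0 < Rmin (e / 2) m) by (apply Rmin_glb_lt; lra).
  set (h := Rmin (e / 2) m) in *.
  specialize (H h ltac:(lra)).
  assert (c * h <= Rabs c * h) by (apply Rmult_le_compat_r; lra).
  assert (Rabs c * h <= Rabs c * m) by (apply Rmult_le_compat_l; lra).
  assert (c * h < a) by nra.
  nra.
Qed.

Lemma posdef2_det a b c : posdef2 a b c -> b * b < a * c.
Proof.
  intro Hpd.
  assert (Ha : 0 < a) by (specialize (Hpd 1 0 ltac:(lra)); lra).
  specialize (Hpd b (- a) ltac:(lra)). nra.
Qed.

Lemma quad_form_nonneg a b d t s :
  0 < a -> b * b <= 4 * a * d -> 0 <= a * t * t + b * t * s + d * s * s.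
Proof.
  intros Ha Hdisc.
  assert (E : 4 * a * (a * t * t + b * t * s + d * s * s)
              = (2 * a * t + b * s) * (2 * a * t + b * s) + (4 * a * d - b * b) * (s * s))
    by ring.
  assert (0 <= (4 * a * d - b * b) * (s * s)) by (apply Rmult_le_pos; [lra | apply Rle_0_sqr]).
  pose proof (Rle_0_sqr (2 * a * t + b * s)). unfold Rsqr in *. nra.
Qed.

Lemma Rlt_div_iff a x y : 0 < a -> (x < y / a <-> a * x < y).
Proof.
  intro Ha; split; intro H.
  - apply (Rmult_lt_compat_l a) in H; [|lra].
    now replace (a * (y / a)) with y in H by (field; lra).
  - apply (Rmult_lt_reg_l a); [lra|].
    now replace (a * (y / a)) with y by (field; lra).
Qed.

Section Model.

Variables D0 al be : R.
Hypotheses (HD0 : 0 < D0) (Hbe : 0 < be) (Hbeal : be < al).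

(* [mono_dem x = D0' - al' x] is CP 1's demand when CP 2 is priced out (case 2 of the
   model), and [choke] is the price at which it vanishes. *)
Definition lin_dem x y := D0 - al * x + be * y.
Definition choke := D0 / (al - be).
Definition mono_slope := (al * al - be * be) / al.
Definition mono_dem x := mono_slope * (choke - x).

Let ratio_pos : 0 < be / al. Proof. apply Rdiv_lt_0_compat; lra. Qed.

Lemma mono_dem_split x y : mono_dem x = lin_dem x y + be / al * lin_dem y x.
Proof. unfold mono_dem, mono_slope, choke, lin_dem. field. lra. Qed.

Lemma dem1_clamp x y :
  dem1 D0 al be x y = Rmax 0 (Rmin (lin_dem x y) (mono_dem x)).
Proof.
  assert (E1 : x < (D0 + be * y) / al <-> 0 < lin_dem x y)
    by (rewrite Rlt_div_iff by lra; unfold lin_dem; lra).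
  assert (E2 : y < (D0 + be * x) / al <-> 0 < lin_dem y x)
    by (rewrite Rlt_div_iff by lra; unfold lin_dem; lra).
  assert (E3 : x < D0 / (al - be) <-> 0 < mono_dem x).
  { rewrite Rlt_div_iff by lra. unfold mono_dem, mono_slope, choke.
    replace ((al * al - be * be) / al * (D0 / (al - be) - x))
      with ((al + be) / al * (D0 - (al - be) * x)) by (field; lra).
    assert (0 < (al + be) / al) by (apply Rdiv_lt_0_compat; lra).
    split; intro; nra. }
  assert (E4 : D0 - al * x + be * (D0 + be * x) / al = mono_dem x)
    by (unfold mono_dem, mono_slope, choke; field; lra).
  pose proof (mono_dem_split x y) as Hsplit.
  set (c := be / al) in *.
  unfold dem1. rewrite E4. change (D0 - al * x + be * y) with (lin_dem x y).
  destruct (Rlt_dec x ((D0 + be * y) / al)) as [h1|h1]; rewrite E1 in h1;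
  destruct (Rlt_dec y ((D0 + be * x) / al)) as [h2|h2]; rewrite E2 in h2;
  destruct (Rlt_dec x (D0 / (al - be))) as [h3|h3]; rewrite E3 in h3;
  unfold Rmin; destruct (Rle_dec (lin_dem x y) (mono_dem x));
  unfold Rmax; repeat match goal with |- context [Rle_dec ?a ?b] => destruct (Rle_dec a b) end;
  nra.
Qed.

Ltac clamp_cases x y :=
  rewrite dem1_clamp; pose proof (mono_dem_split x y); set (c := be / al) in *;
  unfold Rmin; destruct (Rle_dec (lin_dem x y) (mono_dem x));
  unfold Rmax; match goal with |- context [Rle_dec ?a ?b] => destruct (Rle_dec a b) end.

Lemma dem1_ge0 x y : 0 <= dem1 D0 al be x y.
Proof. rewrite dem1_clamp. apply Rmax_l. Qed.

Lemma dem1_eq0_or_le_mono x y :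
  dem1 D0 al be x y = 0 \/ dem1 D0 al be x y <= mono_dem x.
Proof. clamp_cases x y; lra. Qed.

Lemma dem1_eq0 x y : lin_dem x y <= 0 -> dem1 D0 al be x y = 0.
Proof. intro. clamp_cases x y; nra. Qed.

Lemma dem1_lin x y :
  0 <= lin_dem x y -> 0 <= lin_dem y x -> dem1 D0 al be x y = lin_dem x y.
Proof. intros. clamp_cases x y; nra. Qed.

Lemma dem1_mono x y :
  lin_dem y x <= 0 -> 0 <= mono_dem x -> dem1 D0 al be x y = mono_dem x.
Proof. intros. clamp_cases x y; nra. Qed.

Lemma dem1_pos x y :
  0 < dem1 D0 al be x y -> 0 < lin_dem x y /\ 0 < mono_dem x.
Proof. clamp_cases x y; lra. Qed.

Definition revenue pa x y := dem1 D0 al be x y * (x + pa).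
Definition best_response pa x y := forall q, revenue pa q y <= revenue pa x y.
Definition mono_price pa := (choke - pa) / 2.
Definition mono_revenue pa := mono_slope * ((choke + pa) / 2) * ((choke + pa) / 2).

Let slope_pos : 0 < mono_slope.
Proof. apply Rdiv_lt_0_compat; nra. Qed.
Let choke_pos : 0 < choke.
Proof. apply Rdiv_lt_0_compat; lra. Qed.
Let al_choke : al * choke = D0 + be * choke.
Proof. unfold choke. field. lra. Qed.

Lemma mono_revenue_ge0 pa : 0 <= mono_revenue pa.
Proof. unfold mono_revenue. rewrite Rmult_assoc. apply Rmult_le_pos; [lra | apply Rle_0_sqr]. Qed.

Lemma mono_revenue_gap pa x :
  mono_dem x * (x + pa) =
  mono_revenue pa - mono_slope * ((x - mono_price pa) * (x - mono_price pa)).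
Proof. unfold mono_dem, mono_revenue, mono_price. field. Qed.

Lemma revenue_le_mono pa x y : revenue pa x y <= mono_revenue pa.
Proof.
  unfold revenue.
  pose proof (dem1_ge0 x y). pose proof (mono_revenue_ge0 pa).
  destruct (dem1_eq0_or_le_mono x y) as [-> | Hle]; [lra|].
  destruct (Rle_lt_dec (x + pa) 0); [nra|].
  assert (dem1 D0 al be x y * (x + pa) <= mono_dem x * (x + pa))
    by (apply Rmult_le_compat_r; lra).
  assert (0 <= mono_slope * ((x - mono_price pa) * (x - mono_price pa)))
    by (apply Rmult_le_pos; [lra | apply Rle_0_sqr]).
  rewrite mono_revenue_gap in *. lra.
Qed.

Lemma lin_dem_choke pa : 0 <= pa -> lin_dem choke (mono_price pa) <= 0.
Proof. intro. unfold lin_dem, mono_price. nra. Qed.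

Lemma revenue_mono_price pa :
  0 <= pa -> revenue pa (mono_price pa) choke = mono_revenue pa.
Proof.
  intro. unfold revenue. rewrite dem1_mono.
  - unfold mono_dem, mono_revenue, mono_price. field.
  - now apply lin_dem_choke.
  - unfold mono_dem, mono_price. apply Rmult_le_pos; lra.
Qed.

Lemma revenue_choke pa pa' : 0 <= pa' -> revenue pa choke (mono_price pa') = 0.
Proof. intro. unfold revenue. rewrite dem1_eq0 by (now apply lin_dem_choke). ring. Qed.

Lemma exists_revenue_pos pa y :
  y < choke -> 0 < D0 + be * y + al * pa -> exists q, 0 < revenue pa q y.
Proof.
  (* the revenue-maximising price for the linear demand [lin_dem q y] *)
  intros Hy Hpa. set (T := (D0 + be * y) / al).
  assert (HT : al * T = D0 + be * y) by (unfold T; field; lra).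
  exists ((T - pa) / 2).
  assert (Hdem : 0 < dem1 D0 al be ((T - pa) / 2) y).
  { destruct (Rle_lt_dec (lin_dem y ((T - pa) / 2)) 0).
    - rewrite dem1_mono by (try lra; unfold mono_dem; apply Rmult_le_pos; nra).
      unfold mono_dem. apply Rmult_lt_0_compat; nra.
    - rewrite dem1_lin; unfold lin_dem in *; nra. }
  unfold revenue. apply Rmult_lt_0_compat; nra.
Qed.

Lemma revenue_nonpos pa y q :
  D0 + be * y + al * pa <= 0 -> revenue pa q y <= 0.
Proof.
  intro. unfold revenue.
  destruct (Rle_lt_dec (lin_dem q y) 0).
  - rewrite dem1_eq0 by lra. lra.
  - pose proof (dem1_ge0 q y). unfold lin_dem in *. nra.
Qed.

Lemma revenue_pos pa x y :
  0 < revenue pa x y -> 0 < dem1 D0 al be x y /\ 0 < x + pa.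
Proof.
  unfold revenue. pose proof (dem1_ge0 x y). intro Hrev. split.
  - destruct (Rle_lt_dec (dem1 D0 al be x y) 0) as [Hd|]; [|assumption].
    replace (dem1 D0 al be x y) with 0 in Hrev by lra. lra.
  - destruct (Rle_lt_dec (x + pa) 0); [nra | assumption].
Qed.

Lemma best_response_ge0 pa x y : best_response pa x y -> 0 <= revenue pa x y.
Proof.
  intro Hbr. specialize (Hbr (- pa)). unfold revenue in *.
  replace (- pa + pa) with 0 in Hbr by ring. lra.
Qed.

Lemma best_response_pos pa x y :
  best_response pa x y -> y < choke -> 0 < D0 + be * y + al * pa ->
  0 < revenue pa x y.
Proof.
  intros Hbr Hy Hpa. destruct (exists_revenue_pos pa y Hy Hpa) as [q Hq].
  specialize (Hbr q). lra.
Qed.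

Lemma mono_revenue_pos pa : 0 <= pa -> 0 < mono_revenue pa.
Proof.
  intro. unfold mono_revenue. rewrite Rmult_assoc.
  apply Rmult_lt_0_compat; [lra | apply Rmult_lt_0_compat; lra].
Qed.

Lemma threshold_iff pa1 pa2 :
  pa1 >= 2 * al / be * pa2 + (2 * al - be) * D0 / (be * (al - be)) <->
  D0 + be * mono_price pa1 + al * pa2 <= 0.
Proof.
  assert (E : - (D0 + be * mono_price pa1 + al * pa2) =
              be / 2 * (pa1 - (2 * al / be * pa2 + (2 * al - be) * D0 / (be * (al - be)))))
    by (unfold mono_price, choke; field; lra).
  split; intro; nra.
Qed.

Section Game.

Variables g1 g2 pa1 pa2 : R.
Hypotheses (Hg1 : 0 < g1 < 1) (Hg2 : 0 < g2 < 1) (Hpa2 : 0 <= pa2) (Hpa12 : pa2 <= pa1).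

Local Notation isp := (U_ISP D0 al be g1 g2 pa1 pa2).

Lemma isp_revenue p1 p2 : isp p1 p2 = g1 * revenue pa1 p1 p2 + g2 * revenue pa2 p2 p1.
Proof. unfold U_ISP, dem2, revenue. ring. Qed.

Definition price_equilibrium p1 p2 :=
  (forall q1 q2, isp q1 q2 <= isp p1 p2) /\
  best_response pa1 p1 p2 /\ best_response pa2 p2 p1.

Lemma is_NE_iff ps1 ps2 pc1 pc2 :
  is_NE D0 al be g1 g2 pa1 pa2 ps1 ps2 pc1 pc2 <->
  price_equilibrium (ps1 + pc1) (ps2 + pc2).
Proof.
  unfold is_NE, price_equilibrium, best_response, U_CP1, U_CP2, dem2, revenue.
  split; intros [Hisp [H1 H2]]; (split; [|split]).
  - intros q1 q2. specialize (Hisp (q1 - pc1) (q2 - pc2)).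
    now replace (q1 - pc1 + pc1) with q1 in Hisp by ring;
      replace (q2 - pc2 + pc2) with q2 in Hisp by ring.
  - intro q. specialize (H1 (q - ps1)). replace (ps1 + (q - ps1)) with q in H1 by ring.
    rewrite !Rmult_assoc in H1. apply Rmult_le_reg_l in H1; lra.
  - intro q. specialize (H2 (q - ps2)). replace (ps2 + (q - ps2)) with q in H2 by ring.
    rewrite !Rmult_assoc in H2. apply Rmult_le_reg_l in H2; lra.
  - intros qs1 qs2. apply Hisp.
  - intro qc1. rewrite !Rmult_assoc. apply Rmult_le_compat_l; [lra | apply H1].
  - intro qc2. rewrite !Rmult_assoc. apply Rmult_le_compat_l; [lra | apply H2].
Qed.

Lemma isp_mono_profile : isp (mono_price pa1) choke = g1 * mono_revenue pa1.
Proof.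
  rewrite isp_revenue, revenue_mono_price, revenue_choke by lra. ring.
Qed.

Section Equilibrium.

Variables p1 p2 : R.
Hypothesis Heq : price_equilibrium p1 p2.

Let Hisp : forall q1 q2, isp q1 q2 <= isp p1 p2. Proof. apply Heq. Qed.
Let Hbr1 : best_response pa1 p1 p2. Proof. apply Heq. Qed.
Let Hbr2 : best_response pa2 p2 p1. Proof. apply Heq. Qed.

Lemma equilibrium_isp_ge : g1 * mono_revenue pa1 <= isp p1 p2.
Proof. rewrite <- isp_mono_profile. apply Hisp. Qed.

Lemma equilibrium_dem1_pos : 0 < dem1 D0 al be p1 p2.
Proof.
  pose proof (dem1_ge0 p1 p2).
  destruct (Rle_lt_dec (dem1 D0 al be p1 p2) 0) as [H0|]; [exfalso | assumption].
  assert (Hrev1 : revenue pa1 p1 p2 = 0).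
  { unfold revenue. replace (dem1 D0 al be p1 p2) with 0 by lra. ring. }
  pose proof equilibrium_isp_ge as Hge. rewrite isp_revenue, Hrev1 in Hge.
  pose proof (mono_revenue_pos pa1 ltac:(lra)).
  assert (Hrev2 : 0 < revenue pa2 p2 p1) by nra.
  destruct (revenue_pos _ _ _ Hrev2) as [Hd2 Hp2].
  destruct (dem1_pos _ _ Hd2) as [_ Hm2]. unfold mono_dem in Hm2.
  assert (Hrev1' : 0 < revenue pa1 p1 p2) by (apply best_response_pos; [assumption | nra | nra]).
  lra.
Qed.

Lemma equilibrium_foc2 :
  0 < lin_dem p1 p2 -> 0 < lin_dem p2 p1 -> al * (p2 + pa2) <= lin_dem p2 p1.
Proof.
  intros H1 H2.
  enough (al * (p2 + pa2) - lin_dem p2 p1 <= 0) by lra.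
  apply (nonpos_of_first_order _ al (lin_dem p1 p2 / be)); [apply Rdiv_lt_0_compat; lra|].
  intros h [h0 h1]. apply Rlt_div_iff in h1; [|lra].
  specialize (Hbr2 (p2 - h)). unfold revenue in Hbr2.
  rewrite !dem1_lin in Hbr2 by (unfold lin_dem in *; nra).
  unfold lin_dem in *. nra.
Qed.

Lemma equilibrium_foc_isp :
  0 < lin_dem p1 p2 -> 0 < lin_dem p2 p1 ->
  g1 * be * (p1 + pa1) + g2 * (lin_dem p2 p1 - al * (p2 + pa2)) <= 0.
Proof.
  intros H1 H2.
  apply (nonpos_of_first_order _ (g2 * al) (lin_dem p2 p1 / al)); [apply Rdiv_lt_0_compat; lra|].
  intros h [h0 h1]. apply Rlt_div_iff in h1; [|lra].
  specialize (Hisp p1 (p2 + h)). rewrite !isp_revenue in Hisp. unfold revenue in Hisp.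
  rewrite !dem1_lin in Hisp by (unfold lin_dem in *; nra).
  unfold lin_dem in *. nra.
Qed.

(* If both demands were positive, both would be linear near (p1, p2): CP 2 gains nothing by
   lowering p2, so the ISP would gain by raising it. *)
Lemma equilibrium_dem2_zero : dem1 D0 al be p2 p1 = 0.
Proof.
  pose proof (dem1_ge0 p2 p1).
  destruct (Rle_lt_dec (dem1 D0 al be p2 p1) 0) as [|Hd2]; [lra | exfalso].
  pose proof equilibrium_dem1_pos as Hd1.
  destruct (dem1_pos _ _ Hd1) as [H1 _].
  destruct (dem1_pos _ _ Hd2) as [H2 Hm2]. unfold mono_dem in Hm2.
  pose proof (best_response_ge0 _ _ _ Hbr1) as Hrev1. unfold revenue in Hrev1.
  assert (Hrev1' : 0 < revenue pa1 p1 p2)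
    by (apply best_response_pos; [assumption | nra | unfold lin_dem in H1; nra]).
  destruct (revenue_pos _ _ _ Hrev1') as [_ Hp1].
  pose proof (equilibrium_foc2 H1 H2). pose proof (equilibrium_foc_isp H1 H2).
  assert (0 < g1 * be * (p1 + pa1))
    by (apply Rmult_lt_0_compat; [apply Rmult_lt_0_compat |]; lra).
  assert (0 <= g2 * (lin_dem p2 p1 - al * (p2 + pa2))) by (apply Rmult_le_pos; lra).
  lra.
Qed.

Lemma equilibrium_dem1_mono : dem1 D0 al be p1 p2 = mono_dem p1.
Proof.
  destruct (dem1_pos _ _ equilibrium_dem1_pos) as [H1 Hm1].
  apply dem1_mono; [|lra].
  destruct (Rle_lt_dec (lin_dem p2 p1) 0) as [|H2]; [assumption | exfalso].
  pose proof equilibrium_dem2_zero as Hd2. rewrite dem1_lin in Hd2 by lra. lra.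
Qed.

Lemma equilibrium_price1 : p1 = mono_price pa1.
Proof.
  pose proof equilibrium_isp_ge as Hge.
  rewrite isp_revenue in Hge. unfold revenue in Hge.
  rewrite equilibrium_dem2_zero, equilibrium_dem1_mono, mono_revenue_gap in Hge.
  set (S := (p1 - mono_price pa1) * (p1 - mono_price pa1)) in Hge.
  assert (0 < g1 * mono_slope) by (apply Rmult_lt_0_compat; lra).
  assert (g1 * mono_slope * S <= 0) by lra.
  assert (S <= 0) by nra.
  unfold S in *. nra.
Qed.

Lemma equilibrium_threshold : D0 + be * p1 + al * pa2 <= 0.
Proof.
  destruct (Rle_lt_dec (D0 + be * p1 + al * pa2) 0) as [|Hpos]; [assumption | exfalso].
  destruct (dem1_pos _ _ equilibrium_dem1_pos) as [_ Hm1]. unfold mono_dem in Hm1.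
  assert (Hrev : 0 < revenue pa2 p2 p1) by (apply best_response_pos; [assumption | nra | assumption]).
  destruct (revenue_pos _ _ _ Hrev) as [Hd _].
  rewrite equilibrium_dem2_zero in Hd. lra.
Qed.

End Equilibrium.

Section Threshold.

Hypothesis Hpd : posdef2 g1 (- (be / al) * (g1 + g2) / 2) g2.
Hypothesis Hthr : D0 + be * mono_price pa1 + al * pa2 <= 0.

(* Positive definiteness gives [be^2 g2 < 4 al^2 g1] and the threshold gives
   [2 al (choke + pa2) <= be (choke + pa1)]. *)
Lemma mono_revenue2_le : g2 * mono_revenue pa2 <= g1 * mono_revenue pa1.
Proof.
  pose proof (posdef2_det _ _ _ Hpd) as Hdet.
  assert (Hw : be * be * g2 <= 4 * al * al * g1).
  { set (c := be / al) in Hdet.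
    assert (Hc : c * al = be) by (unfold c; field; lra).
    assert (c * c * g2 < 4 * g1) by nra.
    rewrite <- Hc. nra. }
  set (r1 := (choke + pa1) / 2). set (r2 := (choke + pa2) / 2).
  assert (Hr : 0 <= 2 * al * r2 <= be * r1)
    by (unfold r1, r2, mono_price in *; split; nra).
  assert (Hsq : (2 * al * r2) * (2 * al * r2) <= (be * r1) * (be * r1))
    by (apply Rmult_le_compat; lra).
  assert (H4 : 4 * al * al * (g2 * (r2 * r2)) <= 4 * al * al * (g1 * (r1 * r1))) by nra.
  assert (H1 : g2 * (r2 * r2) <= g1 * (r1 * r1))
    by (apply Rmult_le_reg_l with (4 * al * al); nra).
  unfold mono_revenue. fold r1 r2. nra.
Qed.

(* The shortfall is a quadratic form in [(q1 - mono_price pa1, lin_dem q2 q1)], positive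
   semidefinite by [Hpd], plus a linear term whose coefficient is nonnegative by [Hthr]. *)
Lemma isp_linear_le q1 q2 :
  0 <= lin_dem q2 q1 ->
  g1 * (lin_dem q1 q2 * (q1 + pa1)) + g2 * (lin_dem q2 q1 * (q2 + pa2))
  <= g1 * mono_revenue pa1.
Proof.
  intro Hs.
  set (s := lin_dem q2 q1) in *. set (t := q1 - mono_price pa1).
  set (lc := (g1 * be * ((choke + pa1) / 2) - g2 * (D0 + be * mono_price pa1 + al * pa2)) / al).
  assert (Hgap : g1 * mono_revenue pa1
                 - (g1 * (lin_dem q1 q2 * (q1 + pa1)) + g2 * (s * (q2 + pa2)))
                 = g1 * mono_slope * t * t + be / al * (g1 - g2) * t * s
                   + g2 / al * s * s + lc * s).
  { unfold s, t, lc, lin_dem, mono_revenue, mono_slope, mono_price, choke. field. lra. }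
  assert (Hquad : 0 <= g1 * mono_slope * t * t + be / al * (g1 - g2) * t * s + g2 / al * s * s).
  { pose proof (posdef2_det _ _ _ Hpd) as Hdet.
    apply quad_form_nonneg; [apply Rmult_lt_0_compat; lra |].
    assert (4 * (g1 * mono_slope) * (g2 / al) - be / al * (g1 - g2) * (be / al * (g1 - g2))
            = 4 * (g1 * g2 - (- (be / al) * (g1 + g2) / 2) * (- (be / al) * (g1 + g2) / 2)))
      by (unfold mono_slope; field; lra).
    lra. }
  assert (Hlc : 0 <= lc).
  { unfold lc. apply Rmult_le_pos; [| left; apply Rinv_0_lt_compat; lra].
    assert (0 < g1 * (be * ((choke + pa1) / 2)))
      by (apply Rmult_lt_0_compat; [lra | apply Rmult_lt_0_compat; lra]).
    assert (0 <= g2 * - (D0 + be * mono_price pa1 + al * pa2)) by (apply Rmult_le_pos; lra).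
    lra. }
  assert (0 <= lc * s) by (apply Rmult_le_pos; lra).
  lra.
Qed.

Lemma isp_le_mono_revenue q1 q2 : isp q1 q2 <= g1 * mono_revenue pa1.
Proof.
  rewrite isp_revenue. pose proof mono_revenue2_le.
  assert (Hrev1 : g1 * revenue pa1 q1 q2 <= g1 * mono_revenue pa1)
    by (apply Rmult_le_compat_l; [lra | apply revenue_le_mono]).
  assert (Hrev2 : g2 * revenue pa2 q2 q1 <= g2 * mono_revenue pa2)
    by (apply Rmult_le_compat_l; [lra | apply revenue_le_mono]).
  destruct (Rle_lt_dec (lin_dem q2 q1) 0) as [H2|H2].
  { unfold revenue at 2. rewrite (dem1_eq0 q2 q1 H2). lra. }
  destruct (Rle_lt_dec (lin_dem q1 q2) 0) as [H1|H1].
  { unfold revenue at 1. rewrite (dem1_eq0 q1 q2 H1). lra. }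
  unfold revenue. rewrite !dem1_lin by lra. apply isp_linear_le. lra.
Qed.

Lemma mono_equilibrium : price_equilibrium (mono_price pa1) choke.
Proof.
  split; [|split].
  - intros q1 q2. rewrite isp_mono_profile. apply isp_le_mono_revenue.
  - intro q. rewrite revenue_mono_price by lra. apply revenue_le_mono.
  - intro q. rewrite revenue_choke by lra. now apply revenue_nonpos.
Qed.

End Threshold.

End Game.

End Model.

Ltac apply_at_equilibrium lem Heq := eapply lem; [.. | exact Heq]; assumption.

Theorem theorem4 (D0 al be g1 g2 pa1 pa2 : R) :
  0 < D0 -> 0 < be -> be < al ->
  0 < g1 < 1 -> 0 < g2 < 1 ->
  posdef2 g1 (- (be / al) * (g1 + g2) / 2) g2 ->
  0 <= pa2 -> pa2 <= pa1 ->
  let D0' := D0 * (al + be) / al in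
  let al' := (al * al - be * be) / al in
  (pa1 >= 2 * al / be * pa2 + (2 * al - be) * D0 / (be * (al - be)) ->
     (forall x : R, exists ps2 pc1 pc2 : R,
        is_NE D0 al be g1 g2 pa1 pa2 x ps2 pc1 pc2 /\
        0 < dem1 D0 al be (x + pc1) (ps2 + pc2) /\
        dem2 D0 al be (x + pc1) (ps2 + pc2) = 0) /\
     (forall ps1 ps2 pc1 pc2 : R,
        is_NE D0 al be g1 g2 pa1 pa2 ps1 ps2 pc1 pc2 ->
        let p1 := ps1 + pc1 in
        let p2 := ps2 + pc2 in
        0 < dem1 D0 al be p1 p2 /\
        dem2 D0 al be p1 p2 = 0 /\
        p1 = (D0' - al' * pa1) / (2 * al') /\
        dem1 D0 al be p1 p2 = (D0' + al' * pa1) / 2 /\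
        p1 + pa1 = (D0' + al' * pa1) / (2 * al') /\
        U_ISP D0 al be g1 g2 pa1 pa2 p1 p2 = g1 * dem1 D0 al be p1 p2 * (p1 + pa1) /\
        U_CP1 D0 al be g1 pa1 p1 p2 = (1 - g1) * dem1 D0 al be p1 p2 * (p1 + pa1)))
  /\
  (~ (pa1 >= 2 * al / be * pa2 + (2 * al - be) * D0 / (be * (al - be))) ->
     forall ps1 ps2 pc1 pc2 : R, ~ is_NE D0 al be g1 g2 pa1 pa2 ps1 ps2 pc1 pc2).
Proof.
  intros HD0 Hbe Hbeal Hg1 Hg2 Hpd Hpa2 Hpa12 D0' al'.
  set (m := mono_price D0 al be pa1).
  assert (Hm : (D0' - al' * pa1) / (2 * al') = m)
    by (unfold D0', al', m, mono_price, choke; field; repeat split; nra).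
  assert (Hdm : (D0' + al' * pa1) / 2 = mono_dem D0 al be m)
    by (unfold D0', al', m, mono_dem, mono_slope, mono_price, choke; field; lra).
  assert (Hrm : (D0' + al' * pa1) / (2 * al') = m + pa1)
    by (unfold D0', al', m, mono_price, choke; field; repeat split; nra).
  rewrite threshold_iff, Hm, Hdm, Hrm by lra. unfold dem2.
  split.
  - intro Hthr. split.
    + intro x. exists (choke D0 al be), (m - x), 0.
      assert (Heq : price_equilibrium D0 al be g1 g2 pa1 pa2 (x + (m - x)) (choke D0 al be + 0)).
      { replace (x + (m - x)) with m by ring. rewrite Rplus_0_r.
        now apply mono_equilibrium. }
      split; [now apply is_NE_iff | split].
      * apply_at_equilibrium equilibrium_dem1_pos Heq.
      * apply_at_equilibrium equilibrium_dem2_zero Heq.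
    + intros ps1 ps2 pc1 pc2 HNE.
      apply is_NE_iff in HNE; [|assumption..].
      set (p1 := ps1 + pc1) in *. set (p2 := ps2 + pc2) in *.
      assert (Hp1 : p1 = m) by (apply_at_equilibrium equilibrium_price1 HNE).
      assert (Hd2 : dem1 D0 al be p2 p1 = 0) by (apply_at_equilibrium equilibrium_dem2_zero HNE).
      repeat split.
      * apply_at_equilibrium equilibrium_dem1_pos HNE.
      * assumption.
      * assumption.
      * rewrite <- Hp1. apply_at_equilibrium equilibrium_dem1_mono HNE.
      * now rewrite Hp1.
      * unfold U_ISP, dem2. rewrite Hd2. ring.
  - intros Hthr ps1 ps2 pc1 pc2 HNE.
    apply is_NE_iff in HNE; [|assumption..].
    assert (Hp1 : ps1 + pc1 = m) by (apply_at_equilibrium equilibrium_price1 HNE).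
    apply Hthr. fold m. rewrite <- Hp1. apply_at_equilibrium equilibrium_threshold HNE.
Qed.
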